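(* Let $B\colon\mathbf{Set}\to\mathbf{Set}$ be a functor, $\Lambda$ a finite set, and $(\tau_\lambda\colon B[0,1]\to[0,1])_{\lambda\in\Lambda}$ functions such that, for every set $Y$, whenever a sequence of functions $k_i\colon Y\to[0,1]$ converges uniformly to $l$, the sequence $\tau_\lambda\circ Bk_i$ converges uniformly to $\tau_\lambda\circ Bl$ for each $\lambda$. Let $X$ be a set and $S\subseteq\mathbf{Set}(X,[0,1])$ such that (i) $S$ contains the constant function $1$ and is closed under $k\mapsto1-k$, pointwise $\min(k,l)$, and $k\mapsto\max(k-q,0)$ for every $q\in\mathbb{Q}\cap[0,1]$; (ii) the pseudometric space $(X,d_S)$ with $d_S(x,y)=\sup_{k\in S}|k(x)-k(y)|$ is totally bounded. Then $S$ is approximating: for every nonexpansive map $h\colon(X,d_S)\to([0,1],d_e)$, every $\lambda\in\Lambda$ and all $z,w\in BX$, $\sup_{k\in S,\lambda'\in\Lambda}|\tau_{\lambda'}(Bk(z))-\tau_{\lambda'}(Bk(w))|\ge|\tau_\lambda(Bh(z))-\tau_\lambda(Bh(w))|$.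
   Context: $d_e$ is the Euclidean metric on $[0,1]$. A pseudometric space $(X,d)$ is totally bounded if for every $\varepsilon>0$ there is a finite $F\subseteq X$ such that every $x\in X$ has some $y\in F$ with $d(x,y)<\varepsilon$. *)

From HB Require Import structures.
From mathcomp Require Import all_boot all_order all_algebra.
From mathcomp Require Import all_classical all_reals.
Set Implicit Arguments. Unset Strict Implicit. Unset Printing Implicit Defensive.
Import Order.TTheory GRing.Theory Num.Theory.
Local Open Scope classical_set_scope.
Local Open Scope ring_scope.

Record SetFunctor := {
  Fobj :> Type -> Type;
  Fmap : forall (A C : Type), (A -> C) -> Fobj A -> Fobj C;
  Fmap_id : forall A (z : Fobj A), Fmap (fun a : A => a) z = z;
  Fmap_comp : forall A C D (f : A -> C) (g : C -> D) (z : Fobj A),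
      Fmap (fun a => g (f a)) z = Fmap g (Fmap f z) }.

Definition I01 (R : realType) : Type := {x : R | (0 <= x <= 1)}.
Definition ival (R : realType) (x : I01 R) : R := proj1_sig x.

Definition unif_cvg (R : realType) (Y : Type) (k : nat -> Y -> I01 R) (l : Y -> I01 R) :=
  forall eps : R, 0 < eps -> exists N : nat, forall n, (N <= n)%N ->
    forall y, `|ival (k n y) - ival (l y)| < eps.

Definition dS (R : realType) (X : Type) (S : set (X -> I01 R)) (x y : X) : R :=
  sup [set r | exists k, S k /\ r = `|ival (k x) - ival (k y)|].

Definition totally_bounded_pm (X : Type) (R : realType) (d : X -> X -> R) :=
  forall eps : R, 0 < eps -> exists F : set X, finite_set F /\
    forall x, exists y, F y /\ d x y < eps.
Arguments Fmap s {A C} _ _.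

From HB Require Import structures.
From mathcomp Require Import all_boot all_order all_algebra.
From mathcomp Require Import all_classical all_reals.
From mathcomp Require Import lra.
Set Implicit Arguments. Unset Strict Implicit. Unset Printing Implicit Defensive.
Import Order.TTheory GRing.Theory Num.Theory.
Local Open Scope classical_set_scope.
Local Open Scope ring_scope.

(* Given two points a, b, a member of S
   that almost realises d_S(a, b), translated so that it passes close to h(a),
   lies above h(a) - e at a and below h(b) + 2e at b.  Over a finite e-net N,
   max_{a in N} min_{b in N} of these two-point approximants is a member of S
   within 4e of h (the lattice form of Stone-Weierstrass).  So h is a uniform
   limit of members k_n of S, and the continuity hypothesis on tau makes
   |tau(Bh z) - tau(Bh w)| a limit of terms of the supremum. *)

Lemma ival_ge0 (R : realType) (x : I01 R) : 0 <= ival x.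
Proof. by case: x => v /= /andP[]. Qed.

Lemma ival_le1 (R : realType) (x : I01 R) : ival x <= 1.
Proof. by case: x => v /= /andP[]. Qed.

Lemma ival_dist_le1 (R : realType) (x y : I01 R) : `|ival x - ival y| <= 1.
Proof.
have := ival_ge0 x; have := ival_le1 x; have := ival_ge0 y; have := ival_le1 y.
by move=> *; rewrite ler_norml; apply/andP; split; lra.
Qed.

Lemma rat_approx01 (R : realType) (y e : R) : 0 <= y <= 1 -> 0 < e ->
  exists2 q : rat, 0 <= q <= 1 & `|ratr q - y| < e.
Proof.
move=> /andP[y0 y1] e0; have [ye|ey] := ltP y e.
  by exists 0 => //; rewrite rmorph0 ltr_norml; apply/andP; split; lra.
have [q] := @rat_in_itvoo R (y - e) y ltac:(lra).
rewrite in_itv /= => /andP[yeq qy]; exists q; last first.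
  by rewrite ltr_norml; apply/andP; split; lra.
by apply/andP; split; rewrite -(ler_rat R) ?rmorph0 ?rmorph1; lra.
Qed.

Lemma ler_dist_approx (R : realFieldType) (a b c d e : R) :
  `|a - c| < e / 2 -> `|b - d| < e / 2 -> `|c - d| <= `|a - b| + e.
Proof.
move=> ac bd; have := ler_distD a c d; have := ler_distD b a d.
by rewrite [`|c - a|]distrC; lra.
Qed.

Lemma unif_cvg_of_approx (R : realType) (Y : Type) (P : set (Y -> I01 R))
    (l : Y -> I01 R) :
  (forall e : R, 0 < e -> exists2 k, P k & forall y, `|ival (k y) - ival (l y)| < e) ->
  exists2 k : nat -> Y -> I01 R, (forall n, P (k n)) & unif_cvg k l.
Proof.
move=> approx.
have /choice [k kP] : forall n : nat, exists k, P k /\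
    forall y, `|ival (k y) - ival (l y)| < n.+1%:R^-1.
  move=> n; have [|k Pk kl] := approx n.+1%:R^-1; last by exists k.
  by rewrite invr_gt0 ltr0Sn.
exists k => [n|e e0]; first by case: (kP n).
exists (Num.Def.truncn e^-1) => n le_Nn y.
apply: lt_le_trans (proj2 (kP n) y) _; apply/ltW.
rewrite invf_plt ?posrE ?ltr0Sn //; apply: lt_le_trans (truncnS_gt _) _.
by rewrite ler_nat ltnS.
Qed.

Section LatticeApproximation.
Variables (R : realType) (X : Type) (S : set (X -> I01 R)).

Definition Sval : set (X -> R) := [set (fun x => ival (k x)) | k in S].

Lemma Sval_ge0 f x : Sval f -> 0 <= f x.
Proof. by move=> [k _ <-]; exact: ival_ge0. Qed.

Lemma Sval_le1 f x : Sval f -> f x <= 1.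
Proof. by move=> [k _ <-]; exact: ival_le1. Qed.

Lemma dS_has_sup x y : S !=set0 ->
  has_sup [set r | exists k, S k /\ r = `|ival (k x) - ival (k y)|].
Proof.
move=> [k Sk]; split; first by exists `|ival (k x) - ival (k y)|; exists k.
by exists 1 => _ [k' [_ ->]]; exact: ival_dist_le1.
Qed.

Lemma Sval_dist_le_dS f x y : Sval f -> `|f x - f y| <= dS S x y.
Proof.
move=> [k Sk <-]; apply: sup_upper_bound; last by exists k.
by apply: dS_has_sup; exists k.
Qed.

Hypothesis S1 : exists k, S k /\ forall x, ival (k x) = 1.
Hypothesis Scompl : forall k, S k ->
  exists k', S k' /\ forall x, ival (k' x) = 1 - ival (k x).
Hypothesis Smin : forall k l, S k -> S l ->
  exists m, S m /\ forall x, ival (m x) = Num.min (ival (k x)) (ival (l x)).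
Hypothesis Strunc : forall (q : rat), 0 <= q <= 1 -> forall k, S k ->
  exists m, S m /\ forall x, ival (m x) = Num.max (ival (k x) - ratr q) 0.

Lemma Sval1 : Sval (fun=> 1).
Proof. by have [k [Sk k1]] := S1; exists k => //; apply/funext => x /=. Qed.

Lemma SvalC f : Sval f -> Sval (fun x => 1 - f x).
Proof.
move=> [k Sk <-]; have [k' [Sk' k'E]] := Scompl Sk.
by exists k' => //; apply/funext => x /=.
Qed.

Lemma Sval0 : Sval (fun=> 0).
Proof.
have := SvalC Sval1; congr Sval; apply/funext => x; exact: subrr.
Qed.

Lemma Sval_min f g : Sval f -> Sval g -> Sval (fun x => Num.min (f x) (g x)).
Proof.
move=> [k Sk <-] [l Sl <-]; have [m [Sm mE]] := Smin Sk Sl.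
by exists m => //; apply/funext => x /=.
Qed.

Lemma Sval_max f g : Sval f -> Sval g -> Sval (fun x => Num.max (f x) (g x)).
Proof.
move=> Sf Sg; have := SvalC (Sval_min (SvalC Sf) (SvalC Sg)).
congr Sval; apply/funext => x.
by case: (leP (f x) (g x)) => ?; case: leP => ?; lra.
Qed.

Lemma Sval_subq (q : rat) f : 0 <= q <= 1 -> Sval f ->
  Sval (fun x => Num.max (f x - ratr q) 0).
Proof.
move=> q01 [k Sk <-]; have [m [Sm mE]] := Strunc q01 Sk.
by exists m => //; apply/funext => x /=.
Qed.

Lemma Sval_addq (q : rat) f : 0 <= q <= 1 -> Sval f ->
  Sval (fun x => Num.min (f x + ratr q) 1).
Proof.
move=> q01 Sf; have := SvalC (Sval_subq q01 (SvalC Sf)).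
congr Sval; apply/funext => x.
by case: leP => ?; case: leP => ?; lra.
Qed.

Lemma Sval_big (I : Type) (op : R -> R -> R) (idx : R) (r : seq I) (F : I -> X -> R) :
  Sval (fun=> idx) -> (forall f g, Sval f -> Sval g -> Sval (fun x => op (f x) (g x))) ->
  (forall i, Sval (F i)) -> Sval (fun x => \big[op/idx]_(i <- r) F i x).
Proof.
move=> Sidx Sop SF; elim: r => [|i r IHr].
  by congr Sval: Sidx; apply/funext => x; rewrite big_nil.
have := Sop _ _ (SF i) IHr; congr Sval; apply/funext => x.
by rewrite big_cons.
Qed.

Lemma Sval_translate f (t e : R) : Sval f -> -1 <= t <= 1 -> 0 < e ->
  exists2 g, Sval g &
    forall x, Num.min (f x + t) 1 - e <= g x <= Num.max (f x + t) 0 + e.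
Proof.
move=> Sf /andP[t_ge t_le] e0.
have f01 x : 0 <= f x <= 1 by rewrite Sval_ge0 ?Sval_le1.
have [t0|t0] := leP 0 t.
  have [|q q01] := rat_approx01 (y := t) _ e0; first by apply/andP.
  rewrite ltr_norml => /andP[qt tq].
  exists (fun x => Num.min (f x + ratr q) 1); first exact: Sval_addq.
  move=> x; have /andP[? ?] := f01 x.
  case: (leP (f x + t) 1) => ?; case: (leP (f x + ratr q) 1) => ?;
  by case: (leP (f x + t) 0) => ?; apply/andP; split; lra.
have [|q q01] := rat_approx01 (y := - t) _ e0; first by apply/andP; split; lra.
rewrite ltr_norml => /andP[qt tq].
exists (fun x => Num.max (f x - ratr q) 0); first exact: Sval_subq.
move=> x; have /andP[? ?] := f01 x.
case: (leP (f x + t) 1) => ?; case: (leP (f x - ratr q) 0) => ?;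
by case: (leP (f x + t) 0) => ?; apply/andP; split; lra.
Qed.

Lemma Sval_separate a b e : 0 < e -> exists2 g, Sval g & dS S a b - e < g a - g b.
Proof.
move=> e0; have S_neq0 : S !=set0 by have [k1 [Sk1 _]] := S1; exists k1.
have [_ [k [Sk ->]] dk] := sup_adherent e0 (dS_has_sup a b S_neq0).
rewrite -/(dS S a b) in dk.
have [kab|kab] := leP 0 (ival (k a) - ival (k b)).
  by exists (fun x => ival (k x)); [exists k | rewrite -(ger0_norm kab)].
exists (fun x => 1 - ival (k x)); first by apply: SvalC; exists k.
by rewrite ltr0_norm // in dk; lra.
Qed.

Section NonexpansiveTarget.
Variable h : X -> I01 R.
Hypothesis h_nonexp : forall x y, `|ival (h x) - ival (h y)| <= dS S x y.

Lemma Sval_two_point a b e : 0 < e ->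
  exists2 g, Sval g & ival (h a) - e <= g a /\ g b <= ival (h b) + 2 * e.
Proof.
move=> e0; have [g Sg sep] := Sval_separate a b e0.
have ga0 := Sval_ge0 a Sg; have ga1 := Sval_le1 a Sg.
have ha0 := ival_ge0 (h a); have ha1 := ival_le1 (h a); have hb0 := ival_ge0 (h b).
have := h_nonexp a b; rewrite ler_norml => /andP[_ hab].
have [|g' Sg' g'E] := Sval_translate (t := ival (h a) - g a) Sg _ e0.
  by apply/andP; split; lra.
exists g' => //; have /andP[g'a _] := g'E a; have /andP[_ g'b] := g'E b.
rewrite [g a + _]addrC subrK (min_idPl ha1) in g'a; split=> //.
suff : Num.max (g b + (ival (h a) - g a)) 0 <= ival (h b) + e by lra.
by rewrite ge_max; apply/andP; split; lra.
Qed.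

Hypothesis S_totally_bounded : totally_bounded_pm (dS S).

Lemma S_dense e : 0 < e -> exists2 k, S k & forall x, `|ival (k x) - ival (h x)| < e.
Proof.
move=> e0; pose e' := e / 4; have e'0 : 0 < e' by rewrite divr_gt0.
have /choice [G GE] : forall p : X * X, exists g, Sval g /\
    ival (h p.1) - e' <= g p.1 /\ g p.2 <= ival (h p.2) + 2 * e'.
  by move=> [a b]; have [g ? ?] := Sval_two_point a b e'0; exists g.
have [F [/(@finite_seqP {classic X}) [s ->] net]] := S_totally_bounded e'0.
pose g x := \big[Num.max/0]_(a <- s) \big[Num.min/1]_(b <- s) G (a, b) x.
have Sg : Sval g.
  apply: Sval_big Sval0 Sval_max _ => a; apply: Sval_big Sval1 Sval_min _ => b.
  by case: (GE (a, b)).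
case: Sg => k Sk kg; exists k => // x; rewrite (congr1 (@^~ x) kg).
have [y [ys dxy]] := net x.
have hy0 := ival_ge0 (h y); have hy1 := ival_le1 (h y).
have gy_lo : ival (h y) - e' <= g y.
  apply: (bigmax_sup_seq _ _ xpredT _ _ ys) => //; apply: le_bigmin => [|b _]; first lra.
  by case: (GE (y, b)) => _ [].
have gy_hi : g y <= ival (h y) + 2 * e'.
  apply: bigmax_le => [|a _]; first lra.
  apply: (bigmin_inf_seq _ _ xpredT _ _ ys) => //.
  by case: (GE (a, y)) => _ [].
have := Sval_dist_le_dS x y (ex_intro2 _ _ k Sk kg).
have := h_nonexp x y; rewrite !ler_norml ltr_norml => /andP[? ?] /andP[? ?].
by apply/andP; split; rewrite /e' in e'0 gy_lo gy_hi dxy *; lra.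
Qed.

End NonexpansiveTarget.
End LatticeApproximation.

Theorem propositionV6 (R : realType) (B : SetFunctor) (Lam : finType)
  (tau : Lam -> B (I01 R) -> I01 R)
  (htau : forall (Y : Type) (k : nat -> Y -> I01 R) (l : Y -> I01 R),
      unif_cvg k l -> forall lam : Lam,
      unif_cvg (fun n => fun z : B Y => tau lam (Fmap B (k n) z))
               (fun z : B Y => tau lam (Fmap B l z)))
  (X : Type) (S : set (X -> I01 R))
  (S1 : exists k, S k /\ forall x, ival (k x) = 1)
  (Scompl : forall k, S k -> exists k', S k' /\ forall x, ival (k' x) = 1 - ival (k x))
  (Smin : forall k l, S k -> S l ->
      exists m, S m /\ forall x, ival (m x) = Num.min (ival (k x)) (ival (l x)))
  (Strunc : forall (q : rat), 0 <= q <= 1 -> forall k, S k ->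
      exists m, S m /\ forall x, ival (m x) = Num.max (ival (k x) - ratr q) 0)
  (Stb : totally_bounded_pm (dS S)) :
  forall h : X -> I01 R,
    (forall x y, `|ival (h x) - ival (h y)| <= dS S x y) ->
  forall (lam : Lam) (z w : B X),
    `|ival (tau lam (Fmap B h z)) - ival (tau lam (Fmap B h w))|
    <= sup [set r | exists k lam', S k /\
              r = `|ival (tau lam' (Fmap B k z)) - ival (tau lam' (Fmap B k w))|].
Proof.
move=> h h_nonexp lam z w.
have [k Sk kh] := unif_cvg_of_approx (S_dense S1 Scompl Smin Strunc h_nonexp Stb).
set E := [set r | _].
have E_sup : has_sup E.
  split; first by eexists; exists (k 0%N), lam.
  by exists 1 => _ [k' [lam' [_ ->]]]; exact: ival_dist_le1.
apply/ler_addgt0Pr => e e0.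
have [N tauN] := htau _ _ _ kh lam (e / 2) ltac:(by rewrite divr_gt0).
apply: le_trans (ler_dist_approx (tauN N (leqnn N) z) (tauN N (leqnn N) w)) _.
by rewrite lerD2r; apply: sup_upper_bound => //; exists (k N), lam.
Qed.
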